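(* Let $l\ge3$ be an odd integer and let $(A,M)$ be any NIM-rep of the fusion ring $\mathrm{Gr}((A_1,l)_{\frac12})$. Then $(V_{l-1}\vartriangleright m_p,m_q)\le1$ for all $m_p,m_q\in M$.
   Context: For odd $l\ge3$, $\mathrm{Gr}((A_1,l)_{\frac12})$ is the commutative fusion ring with basis $\{V_0,V_2,V_4,\dots,V_{l-1}\}$ (unit $V_0$, every basis element self-dual) and multiplication $V_iV_j=\sum_k V_k$, the sum over all $k$ with $|i-j|\le k\le\min(i+j,2l-i-j)$ and $k\equiv i+j \pmod 2$. A NIM-rep of a fusion ring $(R,B)$ is a nonzero left $R$-module $A$, free over $\mathbb{Z}$ with a fixed basis $M$, such that each $b\vartriangleright m$ is a non-negative integer combination of elements of $M$ and $(b\vartriangleright m,m')=(m,b^*\vartriangleright m')$ for the symmetric bilinear form $(-,-)$ making $M$ orthonormal. *)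

From mathcomp Require Import all_boot.
Set Implicit Arguments. Unset Strict Implicit. Unset Printing Implicit Defensive.

(* Basis of Gr((A_1,l)_{1/2}) for odd l: V_0, V_2, ..., V_{l-1}.
   The basis element indexed by a : 'I_(l./2).+1 is V_(2a) (label a.*2). *)
Definition A1half_basis (l : nat) := 'I_(l./2).+1.
Definition label (l : nat) (a : A1half_basis l) : nat := (nat_of_ord a).*2.

(* Fusion coefficient of V_k in V_i V_j (labels i j k):
   1 if |i-j| <= k <= min(i+j, 2l-i-j) and k = i+j mod 2, else 0. *)
Definition fus_coef (l i j k : nat) : nat :=
  [&& odd k == odd (i + j), (i - j) + (j - i) <= k & k <= minn (i + j) (l.*2 - (i + j))].

(* A based module with basis M: the action of a basis element b on a basis
   element m is the non-negative integer combination encoded as a multiset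
   (a list with multiplicities) of elements of M. The linear extension to the
   free Z-module Z^(M) gives the R-module A. *)
Definition coef (l : nat) (M : eqType) (act : A1half_basis l -> M -> seq M)
  (b : A1half_basis l) (m m' : M) : nat := count_mem m' (act b m).

(* NIM-rep of Gr((A_1,l)_{1/2}) (all basis elements are self-dual). *)
Record is_NIMrep (l : nat) (M : eqType) (act : A1half_basis l -> M -> seq M) : Prop := {
  nim_nonzero : inhabited M;
  nim_unit : forall m : M, perm_eq (act ord0 m) [:: m];
  (* (V_i V_j) |> m = V_i |> (V_j |> m) *)
  nim_assoc : forall (a b : A1half_basis l) (m : M),
    perm_eq
      (flatten [seq flatten (nseq (fus_coef l (label a) (label b) (label c)) (act c m))
               | c <- enum 'I_(l./2).+1])
      (flatten [seq act a m' | m' <- act b m]);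
  (* (b |> m, m') = (m, b^* |> m') with b^* = b *)
  nim_adj : forall (b : A1half_basis l) (m m' : M),
    coef act b m m' = coef act b m' m
}.

(* Write l = 2n + 1 and j = n/2 (rounded down). In the fusion ring the element
   Y = V_(2j+2) - V_(2j) satisfies Y^2 = 2 V_0 - V_(l-1) and Y V_(2n-2j) = +-V_0.
   In a NIM-rep, Y acts by a symmetric integer matrix, so (V_(l-1) p, q) >= 2
   would give |Y (p + q)|^2 = 4 + 4 [p = q] - (V_(l-1) p, p) - (V_(l-1) q, q)
   - 2 (V_(l-1) p, q) <= 0, i.e. Y (p + q) = 0, contradicting the invertibility
   of Y. *)

From mathcomp Require Import all_boot all_order all_algebra zify ring.
Set Implicit Arguments. Unset Strict Implicit. Unset Printing Implicit Defensive.
Import Order.TTheory GRing.Theory Num.Theory.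

Lemma sum_count_mem (T : eqType) (U s : seq T) (F : T -> nat) :
  uniq U -> {subset s <= U} ->
  \sum_(x <- s) F x = \sum_(x <- U) count_mem x s * F x.
Proof.
elim: s => [|y s IHs] U_uniq sU; first by rewrite big_nil big1.
rewrite big_cons IHs => [|//|z zs]; last by apply: sU; rewrite inE zs orbT.
under [RHS]eq_bigr do rewrite /= mulnDl.
rewrite big_split /=; congr (_ + _).
rewrite (bigD1_seq y) ?sU ?mem_head //= eqxx mul1n big1 ?addn0 // => x.
by rewrite eq_sym => /negbTE->.
Qed.

Lemma half_cases (n : nat) : n = n./2.*2 \/ n = n./2.*2.+1.
Proof. by have := odd_double_half n; case: odd => /= n_eq; [right | left]; lia. Qed.

Lemma fus_coef_double (l a b c : nat) :
  fus_coef l a.*2 b.*2 c.*2 =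
    [&& (a - b) + (b - a) <= c, c <= a + b & c <= l - (a + b)].
Proof.
by rewrite /fus_coef leq_min -!doubleD -!doubleB -doubleD !leq_double !odd_double.
Qed.

Lemma fus_coef_dipole_sqr (n c : nat) : 0 < n -> c <= n ->
  fus_coef n.*2.+1 (n./2.+1).*2 (n./2.+1).*2 c.*2
    + fus_coef n.*2.+1 (n./2).*2 (n./2).*2 c.*2 + (c == n)
  = fus_coef n.*2.+1 (n./2.+1).*2 (n./2).*2 c.*2
    + fus_coef n.*2.+1 (n./2).*2 (n./2.+1).*2 c.*2 + 2 * (c == 0).
Proof.
move=> n_gt0 c_le_n; rewrite !fus_coef_double.
have := half_cases n; set j := n./2 => n_eq.
by do !(case: leqP => ? /=); case: eqP => ?; case: eqP => ?; lia.
Qed.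

Lemma fus_coef_dipole_unit (n c : nat) : 0 < n -> c <= n ->
  fus_coef n.*2.+1 (n./2.+1).*2 (n - n./2).*2 c.*2 + ~~ odd n * (c == 0)
  = fus_coef n.*2.+1 (n./2).*2 (n - n./2).*2 c.*2 + odd n * (c == 0).
Proof.
move=> n_gt0 c_le_n; rewrite !fus_coef_double.
have := half_cases n; set j := n./2.
case=> n_eq; rewrite n_eq ?odd_double /= ?oddS ?odd_double /=;
by do !(case: leqP => ? /=); case: eqP => ?; lia.
Qed.

Section FusionProduct.
Local Open Scope ring_scope.

Variable l : nat.
Local Notation basis := (A1half_basis l).

Definition basis_vec (a c : basis) : int := (c == a)%:R.

Definition basis_diff (a b c : basis) : int := basis_vec a c - basis_vec b c.

Definition fusion_mul (v w : basis -> int) (c : basis) : int :=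
  \sum_a v a * \sum_b w b * (fus_coef l (label a) (label b) (label c))%:R.

Lemma sum_basis_vec_mul (a : basis) (G : basis -> int) :
  \sum_c basis_vec a c * G c = G a.
Proof.
rewrite (bigD1 a) //= /basis_vec eqxx mul1r big1 ?addr0 // => c /negbTE->.
by rewrite mul0r.
Qed.

Lemma sum_basis_diff_mul (a b : basis) (G : basis -> int) :
  \sum_c basis_diff a b c * G c = G a - G b.
Proof.
under eq_bigr do rewrite mulrBl.
by rewrite sumrB !sum_basis_vec_mul.
Qed.

End FusionProduct.

Section NIMrep.
Local Open Scope ring_scope.

Variables (l : nat) (M : eqType) (act : A1half_basis l -> M -> seq M).
Hypothesis nim : is_NIMrep act.
Local Notation basis := (A1half_basis l).
Local Notation N := (coef act).

Lemma coef_unit (x y : M) : N ord0 x y = (x == y).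
Proof. by rewrite /coef (permP (nim_unit nim x)) /= addn0. Qed.

Lemma coef_assoc (U : seq M) (a b : basis) (m r : M) :
  uniq U -> {subset act b m <= U} ->
  (\sum_(x <- U) N b m x * N a x r =
   \sum_c fus_coef l (label a) (label b) (label c) * N c m r)%N.
Proof.
move=> U_uniq sU; have /permP/(_ (pred1 r)) := nim_assoc nim a b m.
rewrite !count_flatten -!map_comp !sumnE !big_map => assoc.
rewrite /coef -(sum_count_mem (fun x => count_mem r (act a x)) U_uniq sU) -assoc.
by apply: eq_bigr => c _; rewrite /= count_flatten map_nseq sumn_nseq mulnC.
Qed.

Definition act_coef (w : basis -> int) (x y : M) : int := \sum_b w b * (N b x y)%:R.

Lemma act_coefC (w : basis -> int) (x y : M) : act_coef w x y = act_coef w y x.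
Proof. by apply: eq_bigr => b _; rewrite (nim_adj nim). Qed.

Lemma act_coef_mul (U : seq M) (v w : basis -> int) (x y : M) :
  uniq U -> (forall b, {subset act b x <= U}) ->
  \sum_(r <- U) act_coef w x r * act_coef v r y = act_coef (fusion_mul v w) x y.
Proof.
move=> U_uniq sU.
have assoc a b : \sum_(r <- U) (N b x r)%:R * (N a r y)%:R =
    \sum_c (fus_coef l (label a) (label b) (label c))%:R * (N c x y)%:R :> int.
  under eq_bigr do rewrite -natrM.
  under [RHS]eq_bigr do rewrite -natrM.
  by rewrite -!natr_sum coef_assoc.
rewrite /act_coef /fusion_mul.
transitivity (\sum_a \sum_b \sum_c
    v a * w b * (fus_coef l (label a) (label b) (label c))%:R * (N c x y)%:R).
  under eq_bigr do rewrite big_distrlr /=.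
  rewrite exchange_big /=; under eq_bigr do rewrite exchange_big /=.
  rewrite exchange_big /=; apply: eq_bigr => a _; apply: eq_bigr => b _.
  transitivity (v a * w b * \sum_(r <- U) (N b x r)%:R * (N a r y)%:R).
    by rewrite mulr_sumr; apply: eq_bigr => r _; rewrite mulrACA [w b * _]mulrC.
  by rewrite assoc mulr_sumr; apply: eq_bigr => c _; rewrite mulrA.
under [RHS]eq_bigr do rewrite mulr_suml.
rewrite [RHS]exchange_big /=; apply: eq_bigr => a _.
under [RHS]eq_bigr do rewrite mulr_sumr mulr_suml.
rewrite [RHS]exchange_big /=; apply: eq_bigr => b _.
by apply: eq_bigr => c _; rewrite !mulrA.
Qed.

Definition act_support (s : seq M) : seq M :=
  undup (flatten [seq act b x | b <- enum basis, x <- s]).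

Lemma act_support_uniq (s : seq M) : uniq (act_support s).
Proof. exact: undup_uniq. Qed.

Lemma act_support_sub (s : seq M) (x : M) :
  x \in s -> forall b, {subset act b x <= act_support s}.
Proof.
move=> xs b r rb; rewrite mem_undup; apply/flattenP; exists (act b x) => //.
by apply/allpairsP; exists (b, x); rewrite mem_enum.
Qed.

Lemma act_coefD_eq0_of_sqr (Y : basis -> int) (X : basis) (p q : M) :
  fusion_mul Y Y =1 (fun c => 2 * basis_vec ord0 c - basis_vec X c) ->
  (2 <= N X p q)%N ->
  {in act_support [:: p; q], forall r, act_coef Y p r + act_coef Y q r = 0}.
Proof.
move=> YY XPQ; set U := act_support _.
have Ysq x y : x \in [:: p; q] ->
    \sum_(r <- U) act_coef Y x r * act_coef Y r y = 2 * (x == y)%:R - (N X x y)%:R.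
  move=> xpq; rewrite act_coef_mul ?act_support_uniq //; last exact: act_support_sub.
  rewrite /act_coef; under eq_bigr do rewrite YY mulrBl -mulrA.
  by rewrite sumrB -mulr_sumr !sum_basis_vec_mul coef_unit.
have sqr_sum : \sum_(r <- U) (act_coef Y p r + act_coef Y q r) ^+ 2 =
      \sum_(r <- U) act_coef Y p r * act_coef Y r p
    + \sum_(r <- U) act_coef Y p r * act_coef Y r q
    + (\sum_(r <- U) act_coef Y q r * act_coef Y r p
       + \sum_(r <- U) act_coef Y q r * act_coef Y r q).
  by rewrite -!big_split /=; apply: eq_bigr => r _; rewrite !(act_coefC Y r); ring.
have sqr_sum_le0 : \sum_(r <- U) (act_coef Y p r + act_coef Y q r) ^+ 2 <= 0.
  rewrite sqr_sum !Ysq ?inE ?eqxx ?orbT // (nim_adj nim X q p) (eq_sym q p).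
  by move: XPQ; case: eqP => [<-|_] /= XPQ; lia.
have /eqP : \sum_(r <- U) (act_coef Y p r + act_coef Y q r) ^+ 2 = 0.
  by apply/le_anti; rewrite sqr_sum_le0 sumr_ge0 // => r _; exact: sqr_ge0.
rewrite psumr_eq0 => [/allP vanish r rU|r _]; last exact: sqr_ge0.
by apply/eqP; rewrite -sqrf_eq0; exact: vanish.
Qed.

Lemma act_coefD_neq0_of_unit (Y W : basis -> int) (eps : int) (p q : M) :
  eps != 0 -> fusion_mul Y W =1 (fun c => eps * basis_vec ord0 c) ->
  ~ {in act_support [:: p; q], forall r, act_coef Y p r + act_coef Y q r = 0}.
Proof.
move=> eps_neq0 YW vanish; set U := act_support _ in vanish.
have inv s : \sum_(r <- U) act_coef W p r * act_coef Y r s = eps * (p == s)%:R.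
  rewrite act_coef_mul ?act_support_uniq //; last exact/act_support_sub/mem_head.
  rewrite /act_coef; under eq_bigr do rewrite YW -mulrA.
  by rewrite -mulr_sumr sum_basis_vec_mul coef_unit.
have : eps * ((p == p)%:R + (p == q)%:R) = 0.
  rewrite mulrDr -!inv -big_split big1_seq //= => r rU.
  by rewrite -mulrDr !(act_coefC Y r) vanish ?mulr0.
by apply/eqP; rewrite mulf_eq0 (negbTE eps_neq0) eqxx; case: (p == q).
Qed.

End NIMrep.

Section Dipole.
Local Open Scope ring_scope.

Variable l : nat.
Hypotheses (l_ge3 : (3 <= l)%N) (l_odd : odd l).

Definition dipole : A1half_basis l -> int :=
  basis_diff (inord (l./2)./2.+1) (inord (l./2)./2).

Lemma double_half_odd : l = (l./2).*2.+1.
Proof. by rewrite -[LHS]odd_double_half l_odd. Qed.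

Lemma dipole_sqr :
  fusion_mul dipole dipole =1 (fun c => 2 * basis_vec ord0 c - basis_vec ord_max c).
Proof.
move=> c; have half_gt0 : (0 < l./2)%N by have := double_half_odd; lia.
rewrite /fusion_mul sum_basis_diff_mul !sum_basis_diff_mul /label !inordK; [|lia..].
have := fus_coef_dipole_sqr half_gt0 (leq_ord c); rewrite -double_half_odd.
by rewrite /basis_vec -!val_eqE /=; lia.
Qed.

Lemma dipole_unit :
  fusion_mul dipole (basis_vec (inord (l./2 - (l./2)./2))) =1
    (fun c => (-1) ^+ (~~ odd (l./2)) * basis_vec ord0 c).
Proof.
move=> c; have half_gt0 : (0 < l./2)%N by have := double_half_odd; lia.
rewrite /fusion_mul sum_basis_diff_mul !sum_basis_vec_mul /label !inordK; [|lia..].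
have := fus_coef_dipole_unit half_gt0 (leq_ord c); rewrite -double_half_odd.
by rewrite /basis_vec -!val_eqE /=; case: odd => /=; rewrite ?expr0 ?expr1; lia.
Qed.

End Dipole.

Theorem proposition3p32 (l : nat) (hl3 : 3 <= l) (hlodd : odd l)
  (M : eqType) (act : A1half_basis l -> M -> seq M)
  (hnim : is_NIMrep act) :
  forall p q : M, coef act (@ord_max (l./2)) p q <= 1.
Proof.
move=> p q; rewrite leqNgt; apply/negP => X_pq_ge2.
apply: (act_coefD_neq0_of_unit hnim (q := q) _ (dipole_unit hl3 hlodd)).
  by rewrite signr_eq0.
exact: (act_coefD_eq0_of_sqr hnim (dipole_sqr hl3 hlodd) X_pq_ge2).
Qed.
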